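(* Let $\mathscr{A}$ be quasi-abelian and identify $\mathscr{A}^\mathbb{T}$ for $\mathbb{T}=(1\to0)$, $\mathbb{S}=\{0\}$ with the arrow category $\mathrm{Arr}(\mathscr{A})$, so that $\mathscr{F}\simeq\mathscr{A}$ (arrows $0\to A$) and the reflection sends $a:A_1\to A_0$ to $\mathrm{Cok}(a)$. An extension $(f_0,f_1)$ from $a:A_1\to A_0$ to $b:B_1\to B_0$ (a commutative square $b f_1=f_0 a$ with $f_0,f_1$ regular epimorphisms) is central with respect to $\mathscr{F}$ if and only if $f_1$ is an isomorphism. If moreover $\mathscr{A}$ is abelian, it is trivial if and only if $f_1$ is an isomorphism and $f_0$ and $\mathrm{cok}(a)$ are jointly monomorphic.
   Context: Trivial extension: the naturality square of the unit of the reflection $\mathrm{Arr}(\mathscr{A})\to\mathscr{F}$ at the extension is a pullback. Central extension: its pullback along some monadic extension (regular epimorphism) is trivial. *)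

From HB Require Import structures.
From mathcomp Require Import all_boot all_algebra.
From Stdlib Require Import IndefiniteDescription ProofIrrelevance.

Set Implicit Arguments.
Unset Strict Implicit.
Unset Printing Implicit Defensive.

Import GRing.Theory.
Local Open Scope ring_scope.

Record Cat := Cat_ {
  ob : Type;
  hom : ob -> ob -> Type;
  idm : forall x, hom x x;
  cmp : forall x y z, hom y z -> hom x y -> hom x z;
  cmp_idl : forall x y (f : hom x y), cmp (idm y) f = f;
  cmp_idr : forall x y (f : hom x y), cmp f (idm x) = f;
  cmp_assoc : forall x y z w (h : hom z w) (g : hom y z) (f : hom x y),
      cmp h (cmp g f) = cmp (cmp h g) f }.

Arguments hom : clear implicits.
Arguments idm {_} x.
Arguments cmp {_ x y z} g f.

Section CatNotions.
Variable C : Cat.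

Definition mono x y (f : hom C x y) :=
  forall w (g h : hom C w x), cmp f g = cmp f h -> g = h.
Definition epi x y (f : hom C x y) :=
  forall z (g h : hom C y z), cmp g f = cmp h f -> g = h.
Definition iso x y (f : hom C x y) :=
  exists g : hom C y x, cmp g f = idm x /\ cmp f g = idm y.

Definition is_coequalizer w x y (u v : hom C w x) (q : hom C x y) :=
  cmp q u = cmp q v /\
  forall z (h : hom C x z), cmp h u = cmp h v -> exists! k : hom C y z, cmp k q = h.
Definition regular_epi x y (q : hom C x y) :=
  exists w (u v : hom C w x), is_coequalizer u v q.

Definition is_equalizer e x y (m : hom C e x) (u v : hom C x y) :=
  cmp u m = cmp v m /\
  forall z (h : hom C z x), cmp u h = cmp v h -> exists! k : hom C z e, cmp m k = h.
Definition regular_mono e x (m : hom C e x) :=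
  exists y (u v : hom C x y), is_equalizer m u v.

Definition is_pullback P X Y Z (p1 : hom C P X) (p2 : hom C P Y)
    (f : hom C X Z) (g : hom C Y Z) :=
  cmp f p1 = cmp g p2 /\
  forall Q (q1 : hom C Q X) (q2 : hom C Q Y), cmp f q1 = cmp g q2 ->
    exists! u : hom C Q P, cmp p1 u = q1 /\ cmp p2 u = q2.

Definition is_pushout X Y Z Q (f : hom C X Y) (g : hom C X Z)
    (q1 : hom C Y Q) (q2 : hom C Z Q) :=
  cmp q1 f = cmp q2 g /\
  forall W (h1 : hom C Y W) (h2 : hom C Z W), cmp h1 f = cmp h2 g ->
    exists! u : hom C Q W, cmp u q1 = h1 /\ cmp u q2 = h2.

Definition jointly_mono x y z (f : hom C x y) (g : hom C x z) :=
  forall w (u v : hom C w x), cmp f u = cmp f v -> cmp g u = cmp g v -> u = v.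

End CatNotions.

Record PreAddCat := PreAddCat_ {
  pa_ob : Type;
  pa_hom : pa_ob -> pa_ob -> zmodType;
  pa_id : forall x, pa_hom x x;
  pa_cmp : forall x y z, pa_hom y z -> pa_hom x y -> pa_hom x z;
  pa_cmp_idl : forall x y (f : pa_hom x y), pa_cmp (pa_id y) f = f;
  pa_cmp_idr : forall x y (f : pa_hom x y), pa_cmp f (pa_id x) = f;
  pa_cmp_assoc : forall x y z w (h : pa_hom z w) (g : pa_hom y z) (f : pa_hom x y),
      pa_cmp h (pa_cmp g f) = pa_cmp (pa_cmp h g) f;
  pa_cmpDl : forall x y z (g g' : pa_hom y z) (f : pa_hom x y),
      pa_cmp (g + g') f = pa_cmp g f + pa_cmp g' f;
  pa_cmpDr : forall x y z (g : pa_hom y z) (f f' : pa_hom x y),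
      pa_cmp g (f + f') = pa_cmp g f + pa_cmp g f' }.

Arguments pa_hom : clear implicits.
Arguments pa_id {_} x.
Arguments pa_cmp {_ x y z} g f.

Definition cat_of (A : PreAddCat) : Cat :=
  @Cat_ (pa_ob A) (fun x y => pa_hom A x y) (@pa_id A) (@pa_cmp A)
    (@pa_cmp_idl A) (@pa_cmp_idr A) (@pa_cmp_assoc A).
Coercion cat_of : PreAddCat >-> Cat.

Section PreAddNotions.
Variable A : PreAddCat.

Lemma pa_cmp0r x y z (g : pa_hom A y z) : pa_cmp g (0 : pa_hom A x y) = 0.
Proof.
have H := pa_cmpDr g (0 : pa_hom A x y) 0.
rewrite addr0 in H.
have := congr1 (fun t => t - pa_cmp g (0 : pa_hom A x y)) H.
by rewrite /= subrr addrK => E; rewrite -E.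
Qed.

Lemma pa_cmp0l x y z (f : pa_hom A x y) : pa_cmp (0 : pa_hom A y z) f = 0.
Proof.
have H := pa_cmpDl (0 : pa_hom A y z) 0 f.
rewrite addr0 in H.
have := congr1 (fun t => t - pa_cmp (0 : pa_hom A y z) f) H.
by rewrite /= subrr addrK => E; rewrite -E.
Qed.

Definition is_zero_obj (Z : pa_ob A) :=
  forall X, (forall f : pa_hom A Z X, f = 0) /\ (forall f : pa_hom A X Z, f = 0).

Definition is_biproduct (X Y P : pa_ob A) (i1 : pa_hom A X P) (i2 : pa_hom A Y P)
    (p1 : pa_hom A P X) (p2 : pa_hom A P Y) :=
  [/\ pa_cmp p1 i1 = pa_id X, pa_cmp p2 i2 = pa_id Y,
      pa_cmp p1 i2 = 0, pa_cmp p2 i1 = 0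
    & pa_cmp i1 p1 + pa_cmp i2 p2 = pa_id P].

Definition is_kernel (K X Y : pa_ob A) (f : pa_hom A X Y) (k : pa_hom A K X) :=
  pa_cmp f k = 0 /\
  forall W (h : pa_hom A W X), pa_cmp f h = 0 -> exists! u : pa_hom A W K, pa_cmp k u = h.

Definition is_cokernel (X Y C : pa_ob A) (f : pa_hom A X Y) (q : pa_hom A Y C) :=
  pa_cmp q f = 0 /\
  forall W (h : pa_hom A Y W), pa_cmp h f = 0 -> exists! u : pa_hom A C W, pa_cmp u q = h.

End PreAddNotions.

(* A zero object and cokernels are given as (chosen) data.              *)

Record QACat := QACat_ {
  qa :> PreAddCat;
  qa_zero : {Z : pa_ob qa | is_zero_obj Z};
  qa_biprod : forall X Y : pa_ob qa, exists P i1 i2 p1 p2,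
      @is_biproduct qa X Y P i1 i2 p1 p2;
  qa_ker : forall (X Y : pa_ob qa) (f : pa_hom qa X Y),
      exists K (k : pa_hom qa K X), is_kernel f k;
  qa_cok : forall (X Y : pa_ob qa) (f : pa_hom qa X Y),
      {C : pa_ob qa & {q : pa_hom qa Y C | is_cokernel f q}};
  qa_pb_regepi : forall (P X Y Z : pa_ob qa) (p1 : hom qa P X) (p2 : hom qa P Y)
      (f : hom qa X Z) (g : hom qa Y Z),
      is_pullback p1 p2 f g -> regular_epi g -> regular_epi p1;
  qa_po_regmono : forall (X Y Z Q : pa_ob qa) (f : hom qa X Y) (g : hom qa X Z)
      (q1 : hom qa Y Q) (q2 : hom qa Z Q),
      is_pushout f g q1 q2 -> regular_mono g -> regular_mono q1 }.

Definition abelian (A : QACat) :=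
  (forall (X Y : pa_ob A) (m : hom A X Y), mono m ->
      exists Z (f : pa_hom A Y Z), is_kernel f m) /\
  (forall (X Y : pa_ob A) (e : hom A X Y), epi e ->
      exists W (f : pa_hom A W X), is_cokernel f e).

Record arr (A : PreAddCat) := Arr {
  a_dom : pa_ob A;
  a_cod : pa_ob A;
  a_map : pa_hom A a_dom a_cod }.

Record sq (A : PreAddCat) (a b : arr A) := Sq {
  sq1 : pa_hom A (a_dom a) (a_dom b);
  sq0 : pa_hom A (a_cod a) (a_cod b);
  sq_comm : pa_cmp (a_map b) sq1 = pa_cmp sq0 (a_map a) }.

Section ArrCat.
Variable A : PreAddCat.

Lemma sq_ext (a b : arr A) (f g : sq a b) :
  sq1 f = sq1 g -> sq0 f = sq0 g -> f = g.
Proof.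
case: f => f1 f0 hf; case: g => g1 g0 hg /= e1 e0.
subst; f_equal; apply: proof_irrelevance.
Qed.

Lemma sq_id_comm (a : arr A) :
  pa_cmp (a_map a) (pa_id (a_dom a)) = pa_cmp (pa_id (a_cod a)) (a_map a).
Proof. by rewrite pa_cmp_idr pa_cmp_idl. Qed.

Definition sq_id (a : arr A) : sq a a := Sq (sq_id_comm a).

Lemma sq_cmp_comm (a b c : arr A) (g : sq b c) (f : sq a b) :
  pa_cmp (a_map c) (pa_cmp (sq1 g) (sq1 f)) = pa_cmp (pa_cmp (sq0 g) (sq0 f)) (a_map a).
Proof.
by rewrite pa_cmp_assoc sq_comm -pa_cmp_assoc sq_comm pa_cmp_assoc.
Qed.

Definition sq_cmp (a b c : arr A) (g : sq b c) (f : sq a b) : sq a c :=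
  Sq (sq_cmp_comm g f).

Lemma sq_cmp_idl (a b : arr A) (f : sq a b) : sq_cmp (sq_id b) f = f.
Proof. by apply: sq_ext; rewrite /= pa_cmp_idl. Qed.
Lemma sq_cmp_idr (a b : arr A) (f : sq a b) : sq_cmp f (sq_id a) = f.
Proof. by apply: sq_ext; rewrite /= pa_cmp_idr. Qed.
Lemma sq_cmp_assoc (a b c d : arr A) (h : sq c d) (g : sq b c) (f : sq a b) :
  sq_cmp h (sq_cmp g f) = sq_cmp (sq_cmp h g) f.
Proof. by apply: sq_ext; rewrite /= pa_cmp_assoc. Qed.

Definition ArrCat : Cat :=
  @Cat_ (arr A) (@sq A) sq_id sq_cmp sq_cmp_idl sq_cmp_idr sq_cmp_assoc.

Definition is_extension (a b : arr A) (f : sq a b) :=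
  regular_epi (C := cat_of A) (sq0 f) /\ regular_epi (C := cat_of A) (sq1 f).

End ArrCat.

Section Reflection.
Variable A : QACat.

Definition zobj : pa_ob A := proj1_sig (qa_zero A).
Definition Cok (a : arr A) : pa_ob A := projT1 (qa_cok (a_map a)).
Definition cokm (a : arr A) : pa_hom A (a_cod a) (Cok a) :=
  proj1_sig (projT2 (qa_cok (a_map a))).
Lemma cokm_cok (a : arr A) : is_cokernel (a_map a) (cokm a).
Proof. exact: proj2_sig (projT2 (qa_cok (a_map a))). Qed.

Definition Rob (a : arr A) : arr A := @Arr A zobj (Cok a) 0.

Lemma eta_comm (a : arr A) :
  pa_cmp (a_map (Rob a)) (0 : pa_hom A (a_dom a) zobj) = pa_cmp (cokm a) (a_map a).
Proof. by rewrite pa_cmp0r (proj1 (cokm_cok a)). Qed.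

Definition eta (a : arr A) : sq a (Rob a) := Sq (eta_comm a).

Lemma cokind_ex (a b : arr A) (f : sq a b) :
  exists! u : pa_hom A (Cok a) (Cok b), pa_cmp u (cokm a) = pa_cmp (cokm b) (sq0 f).
Proof.
apply: (proj2 (cokm_cok a)).
rewrite -pa_cmp_assoc -sq_comm pa_cmp_assoc (proj1 (cokm_cok b)).
exact: pa_cmp0l.
Qed.

Definition cokind (a b : arr A) (f : sq a b) : pa_hom A (Cok a) (Cok b) :=
  proj1_sig (constructive_indefinite_description _ (cokind_ex f)).

Lemma Rmor_comm (a b : arr A) (f : sq a b) :
  pa_cmp (a_map (Rob b)) (0 : pa_hom A zobj zobj) = pa_cmp (cokind f) (a_map (Rob a)).
Proof. by rewrite /= !pa_cmp0r. Qed.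

Definition Rmor (a b : arr A) (f : sq a b) : sq (Rob a) (Rob b) :=
  @Sq A (Rob a) (Rob b) 0 (cokind f) (Rmor_comm f).

Definition trivial_ext (a b : arr A) (f : sq a b) :=
  is_extension f /\
  is_pullback (C := ArrCat A) (eta a) f (Rmor f) (eta b).

Definition central_ext (a b : arr A) (f : sq a b) :=
  is_extension f /\
  exists (E : arr A) (p : sq E b), is_extension p /\
    exists (P : arr A) (pi1 : sq P a) (pi2 : sq P E),
      is_pullback (C := ArrCat A) pi1 pi2 f p /\ trivial_ext pi2.

End Reflection.

(* Pullbacks in Arr(A) are computed componentwise.  On domains the naturality
   square of the unit at f is the square of f1 over the zero object, which is a
   pullback exactly when f1 is invertible; on codomains it is the square formed
   by the cokernels of a and b.

   Central => f1 iso: some pullback of f has invertible domain component, and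
   in a preadditive category a map is mono as soon as one of its pullbacks is
   (a difference u - v killed by f1 lifts to the pullback).  Being a regular
   epi, f1 is then invertible.
   f1 iso => central: pull f back along itself.  The kernel pair of f is
   (A1 -> A0 (+) Ker f0), i.e. a (+) (0 -> Ker f0), and its projection to a is
   trivial because it only adds an object of F.

   In the abelian case, when f1 is epi the cokernel square is a pushout: the
   map [Cok f, -cok b] is the cokernel of (cok a, f0) : A0 -> Cok a (+) B0.
   This map is mono iff f0 and cok a are jointly mono, and then, A being
   abelian, it is the kernel of its cokernel, i.e. the square is a pullback. *)
From mathcomp Require Import all_boot all_algebra.
From Stdlib Require Import IndefiniteDescription.

Set Implicit Arguments.
Unset Strict Implicit.
Unset Printing Implicit Defensive.

Import GRing.Theory.
Local Open Scope ring_scope.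

Section Category.
Variable C : Cat.

Lemma iso_mono x y (f : hom C x y) : iso f -> mono f.
Proof.
move=> [g [gf _]] w u v e.
by rewrite -(cmp_idl u) -(cmp_idl v) -gf -!cmp_assoc e.
Qed.

Lemma iso_epi x y (f : hom C x y) : iso f -> epi f.
Proof.
move=> [g [_ fg]] z u v e.
by rewrite -(cmp_idr u) -(cmp_idr v) -fg !cmp_assoc e.
Qed.

Lemma idm_iso x : iso (idm x : hom C x x).
Proof. by exists (idm x); rewrite cmp_idl. Qed.

Lemma idm_regular_epi x : regular_epi (idm x : hom C x x).
Proof.
exists x, (idm x), (idm x); split => // z h _.
by exists h; split => [|k]; rewrite cmp_idr.
Qed.

Lemma regular_epi_mono_iso x y (q : hom C x y) : regular_epi q -> mono q -> iso q.
Proof.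
move=> [w [u [v [quv coeq]]]] qmono.
have [s [qs _]] := coeq x (idm x) (congr1 (cmp (idm x)) (qmono _ _ _ quv)).
exists s; split => //.
have [r [_ uniq]] := coeq y q quv.
rewrite -(uniq (cmp q s)) ?(uniq (idm y)) ?cmp_idl //.
by rewrite -cmp_assoc qs cmp_idr.
Qed.

Lemma pullback_jointly_mono P X Y Z (p1 : hom C P X) (p2 : hom C P Y)
    (f : hom C X Z) (g : hom C Y Z) :
  is_pullback p1 p2 f g -> jointly_mono p1 p2.
Proof.
move=> [fg univ] W u v e1 e2.
have fgu : cmp f (cmp p1 u) = cmp g (cmp p2 u) by rewrite !cmp_assoc fg.
have [w [_ uniq]] := univ W _ _ fgu.
by rewrite -(uniq u (conj erefl erefl)) (uniq v (conj (esym e1) (esym e2))).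
Qed.

Lemma mono_pullback_idm x y (f : hom C x y) :
  mono f -> is_pullback (idm x) (idm x) f f.
Proof.
move=> fmono; split => // Q q1 q2 /fmono <-.
by exists q1; split => [|u [<- _]]; rewrite cmp_idl.
Qed.

End Category.

Section Preadditive.
Variable A : PreAddCat.
Local Notation "g ∘ f" := (pa_cmp g f) (at level 40, left associativity).

Lemma pa_cmpNr x y z (g : pa_hom A y z) (f : pa_hom A x y) : g ∘ (- f) = - (g ∘ f).
Proof. by apply/eqP; rewrite -addr_eq0 -pa_cmpDr addNr pa_cmp0r. Qed.

Lemma pa_cmpNl x y z (g : pa_hom A y z) (f : pa_hom A x y) : (- g) ∘ f = - (g ∘ f).
Proof. by apply/eqP; rewrite -addr_eq0 -pa_cmpDl addNr pa_cmp0l. Qed.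

Lemma pa_cmpBr x y z (g : pa_hom A y z) (f f' : pa_hom A x y) :
  g ∘ (f - f') = g ∘ f - g ∘ f'.
Proof. by rewrite pa_cmpDr pa_cmpNr. Qed.

Lemma pa_cmpBl x y z (g g' : pa_hom A y z) (f : pa_hom A x y) :
  (g - g') ∘ f = g ∘ f - g' ∘ f.
Proof. by rewrite pa_cmpDl pa_cmpNl. Qed.

Lemma cokernel_epi X Y Q (f : pa_hom A X Y) (q : pa_hom A Y Q) :
  is_cokernel f q -> epi (C := A) q.
Proof.
move=> [qf univ] W u v /= e.
have uqf : (u ∘ q) ∘ f = 0 by rewrite -pa_cmp_assoc qf pa_cmp0r.
have [w [_ uniq]] := univ W _ uqf.
by rewrite -(uniq u erefl) (uniq v (esym e)).
Qed.

Lemma cokernel_regular_epi X Y Q (f : pa_hom A X Y) (q : pa_hom A Y Q) :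
  is_cokernel f q -> regular_epi (C := A) q.
Proof.
move=> [qf univ]; exists X, f, 0; split => /=; first by rewrite qf pa_cmp0r.
by move=> Z h; rewrite pa_cmp0r; exact: univ.
Qed.

Lemma kernel_of_cokernel X Y Z W (m : pa_hom A X Y) (g : pa_hom A Y Z)
    (d : pa_hom A Y W) :
  is_kernel g m -> is_cokernel m d -> is_kernel d m.
Proof.
move=> [gm univ] [dm cokd]; split => // V h dh.
have [g' [g'd _]] := cokd Z g gm.
by apply: univ; rewrite -g'd -pa_cmp_assoc dh pa_cmp0r.
Qed.

Lemma pullback_mono P X Y Z (p1 : pa_hom A P X) (p2 : pa_hom A P Y)
    (f : pa_hom A X Z) (g : pa_hom A Y Z) :
  is_pullback (C := A) p1 p2 f g -> mono (C := A) p2 -> mono (C := A) f.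
Proof.
move=> [_ univ] p2mono W u v /= e.
have fuv : f ∘ (u - v) = g ∘ 0 by rewrite pa_cmpBr e subrr pa_cmp0r.
have [k [[/= k1 k2] _]] := univ W _ _ fuv.
have k0 : k = 0 by apply: p2mono; rewrite /= k2 pa_cmp0r.
by apply/eqP; rewrite -subr_eq0 -k1 k0 pa_cmp0r.
Qed.

Lemma pullback_over_zero_iso Z X Y (f : pa_hom A X Y) : is_zero_obj Z ->
  is_pullback (C := A) (0 : pa_hom A X Z) f (0 : pa_hom A Z Z) (0 : pa_hom A Y Z)
  <-> iso (C := A) f.
Proof.
move=> Z0; have toZ W (u v : pa_hom A W Z) : u = v.
  by rewrite ((Z0 W).2 u) ((Z0 W).2 v).
split => [pb | [g [/= gf /= fg]]].
  have [_ univ] := pb.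
  have [s [[_ /= fs] _]] := univ Y 0 (pa_id Y) (toZ _ _ _).
  exists s; split => //; apply: (pullback_jointly_mono pb) => /=; first exact: toZ.
  by rewrite pa_cmp_assoc fs pa_cmp_idl pa_cmp_idr.
split => /=; first exact: toZ.
move=> Q q1 q2 _; exists (g ∘ q2); split => [|u [_ <-]].
  by split; [exact: toZ | rewrite /= pa_cmp_assoc fg pa_cmp_idl].
by rewrite /= pa_cmp_assoc gf pa_cmp_idl.
Qed.

Section Biproduct.
Variables (X Y S : pa_ob A) (iX : pa_hom A X S) (iY : pa_hom A Y S).
Variables (pX : pa_hom A S X) (pY : pa_hom A S Y).
Hypothesis biprod : is_biproduct iX iY pX pY.

Lemma biprod_expand W (v : pa_hom A W S) : v = iX ∘ (pX ∘ v) + iY ∘ (pY ∘ v).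
Proof.
by case: biprod => _ _ _ _ sum; rewrite !pa_cmp_assoc -pa_cmpDl sum pa_cmp_idl.
Qed.

Lemma biprod_pairX W (g : pa_hom A W X) (h : pa_hom A W Y) :
  pX ∘ (iX ∘ g + iY ∘ h) = g.
Proof.
case: biprod => pXiX _ pXiY _ _.
by rewrite pa_cmpDr !pa_cmp_assoc pXiX pXiY pa_cmp_idl pa_cmp0l addr0.
Qed.

Lemma biprod_pairY W (g : pa_hom A W X) (h : pa_hom A W Y) :
  pY ∘ (iX ∘ g + iY ∘ h) = h.
Proof.
case: biprod => _ pYiY _ pYiX _.
by rewrite pa_cmpDr !pa_cmp_assoc pYiY pYiX pa_cmp_idl pa_cmp0l add0r.
Qed.

Lemma biprod_pair_mono W (g : pa_hom A W X) (h : pa_hom A W Y) :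
  jointly_mono (C := A) g h -> mono (C := A) (iX ∘ g + iY ∘ h).
Proof.
move=> gh V u v /= e; apply: gh => /=.
  by rewrite -(biprod_pairX g h) -!pa_cmp_assoc e.
by rewrite -(biprod_pairY g h) -!pa_cmp_assoc e.
Qed.

Lemma biprod_cokernel : is_cokernel iY pX.
Proof.
case: biprod => pXiX _ pXiY _ sum; split => // W h hiY.
exists (h ∘ iX); split => [|k <-]; last by rewrite -pa_cmp_assoc pXiX pa_cmp_idr.
by rewrite -pa_cmp_assoc -[RHS]pa_cmp_idr -sum pa_cmpDr !pa_cmp_assoc hiY pa_cmp0l addr0.
Qed.

Lemma kernel_pair_pullback Z (g : pa_hom A X Z) (k : pa_hom A Y X) :
  is_kernel g k -> is_pullback (C := A) (pX + k ∘ pY) pX g g.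
Proof.
move=> [gk univ]; split => /=; first by rewrite pa_cmpDr pa_cmp_assoc gk pa_cmp0l addr0.
move=> Q q1 q2 /= e.
have gq : g ∘ (q1 - q2) = 0 by rewrite pa_cmpBr e subrr.
have [t [kt uniq]] := univ Q _ gq.
exists (iX ∘ q2 + iY ∘ t); split => [|v [/= v1 v2]].
  split => /=; last exact: biprod_pairX.
  by rewrite pa_cmpDl -pa_cmp_assoc biprod_pairX biprod_pairY kt addrC subrK.
have -> : t = pY ∘ v.
  by apply: uniq; rewrite pa_cmp_assoc -v1 -v2 pa_cmpDl addrAC subrr add0r.
by rewrite -v2 -biprod_expand.
Qed.

Lemma kernel_diff_pullback Z P (f : pa_hom A X Z) (g : pa_hom A Y Z)
    (m : pa_hom A P S) :
  is_kernel (f ∘ pX - g ∘ pY) m -> is_pullback (C := A) (pX ∘ m) (pY ∘ m) f g.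
Proof.
move=> [Dm univ]; split.
  by apply/eqP; rewrite /= !pa_cmp_assoc -subr_eq0 -pa_cmpBl Dm.
move=> Q q1 q2 /= e.
have Dq : (f ∘ pX - g ∘ pY) ∘ (iX ∘ q1 + iY ∘ q2) = 0.
  by rewrite pa_cmpBl -!pa_cmp_assoc biprod_pairX biprod_pairY e subrr.
have [u [mu uniq]] := univ Q _ Dq.
exists u; split => [|v [/= v1 v2]].
  by split; rewrite /= -pa_cmp_assoc mu ?biprod_pairX ?biprod_pairY.
by apply: uniq; rewrite -v1 -v2 -!pa_cmp_assoc -biprod_expand.
Qed.

(* Cok (iX x) is Cok x (+) Y, so the cokernel square of the projection
   X (+) Y -> X is a pullback. *)
Lemma biprod_cokernel_pullback X1 Q Qx (x : pa_hom A X1 X) (qx : pa_hom A X Qx)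
    (q : pa_hom A S Q) (u : pa_hom A Q Qx) :
  is_cokernel x qx -> is_cokernel (iX ∘ x) q -> u ∘ q = qx ∘ pX ->
  is_pullback (C := A) q pX u qx.
Proof.
move=> cokx cokq uq; case: biprod => _ _ _ pYiX sum.
have [s [sq _]] : exists! s : pa_hom A Q Y, s ∘ q = pY.
  by apply: cokq.2; rewrite pa_cmp_assoc pYiX pa_cmp0l.
have [c [cqx _]] : exists! c : pa_hom A Qx Q, c ∘ qx = q ∘ iX.
  by apply: cokx.2; rewrite -pa_cmp_assoc cokq.1.
have split_q : c ∘ u + (q ∘ iY) ∘ s = pa_id Q.
  apply: (cokernel_epi cokq) => /=; rewrite pa_cmpDl -!pa_cmp_assoc uq sq.
  by rewrite pa_cmp_assoc cqx -!pa_cmp_assoc -pa_cmpDr sum pa_cmp_idr pa_cmp_idl.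
split => // Q' q1 q2 /= e.
exists (iX ∘ q2 + iY ∘ (s ∘ q1)); split => [|v [/= v1 v2]].
  split => /=; last exact: biprod_pairX.
  rewrite pa_cmpDr !pa_cmp_assoc -cqx -pa_cmp_assoc -e pa_cmp_assoc -pa_cmpDl.
  by rewrite split_q pa_cmp_idl.
by rewrite -v1 -v2 (pa_cmp_assoc s) sq -biprod_expand.
Qed.

End Biproduct.

(* The probe objects (id : Q -> Q) and (0 : Q -> Q) of Arr(A) see the domain,
   resp. codomain, components of squares. *)
Definition dom_probe (Q : pa_ob A) (V : arr A) (q : pa_hom A Q (a_dom V)) :
    sq (Arr (pa_id Q)) V :=
  @Sq A (Arr (pa_id Q)) V q _ (esym (pa_cmp_idr (a_map V ∘ q))).

Definition cod_probe (Q : pa_ob A) (V : arr A) (q : pa_hom A Q (a_cod V)) :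
    sq (Arr (0 : pa_hom A Q Q)) V :=
  @Sq A (Arr (0 : pa_hom A Q Q)) V 0 q
    (etrans (pa_cmp0r Q (a_map V)) (esym (pa_cmp0r Q q))).

Section ArrowPullbacks.
Variables (P X Y Z : arr A) (p1 : sq P X) (p2 : sq P Y) (f : sq X Z) (g : sq Y Z).

Lemma arr_pullback_dom :
  is_pullback (C := ArrCat A) p1 p2 f g ->
  is_pullback (C := A) (sq1 p1) (sq1 p2) (sq1 f) (sq1 g).
Proof.
move=> [fg univ]; split; first exact: (congr1 (@sq1 _ _ _) fg).
move=> Q q1 q2 /= e.
have fgq : cmp (c := ArrCat A) f (dom_probe q1) = cmp (c := ArrCat A) g (dom_probe q2).
  apply: sq_ext => //=.
  by rewrite !pa_cmp_assoc -!sq_comm -!pa_cmp_assoc e.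
have [u [[u1 u2] uniq]] := univ _ _ _ fgq.
exists (sq1 u); split => [|v [/= v1 v2]].
  by split; [exact: (congr1 (@sq1 _ _ _) u1) | exact: (congr1 (@sq1 _ _ _) u2)].
have -> // : u = dom_probe v.
by apply: uniq; split; apply: sq_ext => //=;
  rewrite pa_cmp_assoc -sq_comm -pa_cmp_assoc ?v1 ?v2.
Qed.

Lemma arr_pullback_cod :
  is_pullback (C := ArrCat A) p1 p2 f g ->
  is_pullback (C := A) (sq0 p1) (sq0 p2) (sq0 f) (sq0 g).
Proof.
move=> [fg univ]; split; first exact: (congr1 (@sq0 _ _ _) fg).
move=> Q q1 q2 /= e.
have fgq : cmp (c := ArrCat A) f (cod_probe q1) = cmp (c := ArrCat A) g (cod_probe q2).
  by apply: sq_ext; rewrite //= !pa_cmp0r.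
have [u [[u1 u2] uniq]] := univ _ _ _ fgq.
exists (sq0 u); split => [|v [/= v1 v2]].
  by split; [exact: (congr1 (@sq0 _ _ _) u1) | exact: (congr1 (@sq0 _ _ _) u2)].
have -> // : u = cod_probe v.
by apply: uniq; split; apply: sq_ext; rewrite //= pa_cmp0r.
Qed.

Lemma arr_pullback :
  is_pullback (C := A) (sq1 p1) (sq1 p2) (sq1 f) (sq1 g) ->
  is_pullback (C := A) (sq0 p1) (sq0 p2) (sq0 f) (sq0 g) ->
  is_pullback (C := ArrCat A) p1 p2 f g.
Proof.
move=> pb1 pb0; have [fg1 univ1] := pb1; have [fg0 univ0] := pb0.
split; first exact: sq_ext.
move=> Q q1 q2 e.
have [u1 [[/= u11 u12] uniq1]] := univ1 _ _ _ (congr1 (@sq1 _ _ _) e).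
have [u0 [[/= u01 u02] uniq0]] := univ0 _ _ _ (congr1 (@sq0 _ _ _) e).
have u_comm : a_map P ∘ u1 = u0 ∘ a_map Q.
  apply: (pullback_jointly_mono pb0) => /=;
    by rewrite pa_cmp_assoc -sq_comm -pa_cmp_assoc ?u11 ?u12 pa_cmp_assoc
      ?u01 ?u02 sq_comm.
exists (Sq u_comm); split => [|v [v1 v2]]; first by split; apply: sq_ext.
apply: sq_ext => /=; [apply: uniq1 | apply: uniq0]; split;
  by [exact: (congr1 (@sq1 _ _ _) v1) | exact: (congr1 (@sq1 _ _ _) v2)
     | exact: (congr1 (@sq0 _ _ _) v1) | exact: (congr1 (@sq0 _ _ _) v2)].
Qed.

End ArrowPullbacks.

End Preadditive.

Lemma abelian_mono_kernel_cokernel (A : QACat) X Y W (m : pa_hom A X Y)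
    (d : pa_hom A Y W) :
  abelian A -> mono (C := A) m -> is_cokernel m d -> is_kernel d m.
Proof.
move=> [monoK _] mmono cokd; have [Z [g gm]] := monoK _ _ m mmono.
exact: kernel_of_cokernel gm cokd.
Qed.

Section Reflection.
Variable A : QACat.
Local Notation "g ∘ f" := (pa_cmp g f) (at level 40, left associativity).

Lemma cokind_spec (a b : arr A) (f : sq a b) : cokind f ∘ cokm a = cokm b ∘ sq0 f.
Proof.
by rewrite /cokind; case: (constructive_indefinite_description _ _) => u [].
Qed.

Lemma trivial_extE (a b : arr A) (f : sq a b) :
  trivial_ext f <-> [/\ is_extension f, iso (C := A) (sq1 f) &
    is_pullback (C := A) (cokm a) (sq0 f) (cokind f) (cokm b)].
Proof.
have zero_pb := pullback_over_zero_iso (sq1 f) (proj2_sig (qa_zero A)).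
split => [[ext pb] | [ext f1iso pb0]].
  split => //; last exact: arr_pullback_cod pb.
  by apply/zero_pb; exact: arr_pullback_dom pb.
by split => //; apply: arr_pullback => //; apply/zero_pb.
Qed.

Lemma cokernel_square_cokernel (a b : arr A) (f : sq a b) S
    (iX : pa_hom A (Cok a) S) (iY : pa_hom A (a_cod b) S)
    (pX : pa_hom A S (Cok a)) (pY : pa_hom A S (a_cod b)) :
  epi (C := A) (sq1 f) -> is_biproduct iX iY pX pY ->
  is_cokernel (iX ∘ cokm a + iY ∘ sq0 f) (cokind f ∘ pX - cokm b ∘ pY).
Proof.
move=> f1epi bp; have [_ pYiY pXiY _ sum] := bp.
split.
  rewrite pa_cmpBl -!pa_cmp_assoc (biprod_pairX bp) (biprod_pairY bp).
  by rewrite cokind_spec subrr.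
move=> W h hM.
have hMe : (h ∘ iY) ∘ sq0 f = - ((h ∘ iX) ∘ cokm a).
  by apply/eqP; rewrite -addr_eq0 addrC -!pa_cmp_assoc -pa_cmpDr hM.
have hYb : (- (h ∘ iY)) ∘ a_map b = 0.
  rewrite pa_cmpNl; apply/eqP; rewrite oppr_eq0; apply/eqP.
  apply: f1epi; rewrite /= pa_cmp0l -pa_cmp_assoc sq_comm pa_cmp_assoc hMe.
  by rewrite pa_cmpNl -pa_cmp_assoc (cokm_cok a).1 pa_cmp0r oppr0.
have [u [ub uniq]] := (cokm_cok b).2 W _ hYb.
have uc : u ∘ cokind f = h ∘ iX.
  apply: (cokernel_epi (cokm_cok a)) => /=.
  by rewrite -pa_cmp_assoc cokind_spec pa_cmp_assoc ub pa_cmpNl hMe opprK.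
exists u; split => [|v vD].
  rewrite pa_cmpBr !pa_cmp_assoc uc ub pa_cmpNl opprK -!pa_cmp_assoc -pa_cmpDr.
  by rewrite sum pa_cmp_idr.
apply: uniq; rewrite -vD -pa_cmp_assoc pa_cmpBl -!pa_cmp_assoc pXiY pYiY.
by rewrite pa_cmp0r pa_cmp_idr sub0r pa_cmpNr opprK.
Qed.

Lemma central_ext_iso (a b : arr A) (f : sq a b) :
  central_ext f -> iso (C := A) (sq1 f).
Proof.
move=> [[_ f1reg] [E [p [_ [P [pi1 [pi2 [pb /trivial_extE [_ pi2iso _]]]]]]]]].
apply: regular_epi_mono_iso f1reg _.
exact: pullback_mono (arr_pullback_dom pb) (iso_mono pi2iso).
Qed.

Lemma iso_central_ext (a b : arr A) (f : sq a b) :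
  is_extension f -> iso (C := A) (sq1 f) -> central_ext f.
Proof.
move=> ext f1iso; split => //; exists a, f; split => //.
have [K [k kerf0]] := qa_ker (sq0 f).
have [S [iX [iK [pX [pK bp]]]]] := qa_biprod (a_cod a) K.
have [pXiX _ _ pKiX _] := bp.
pose P := Arr (iX ∘ a_map a).
have pi1X : (pX + k ∘ pK) ∘ iX = pa_id _.
  by rewrite pa_cmpDl -pa_cmp_assoc pXiX pKiX pa_cmp0r addr0.
have pi1_comm : a_map a ∘ pa_id _ = (pX + k ∘ pK) ∘ a_map P.
  by rewrite /= pa_cmp_idr pa_cmp_assoc pi1X pa_cmp_idl.
have pi2_comm : a_map a ∘ pa_id _ = pX ∘ a_map P.
  by rewrite /= pa_cmp_idr pa_cmp_assoc pXiX pa_cmp_idl.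
pose pi2 := @Sq A P a _ _ pi2_comm.
exists P, (@Sq A P a _ _ pi1_comm), pi2; split.
  apply: arr_pullback => /=; first exact: mono_pullback_idm (iso_mono f1iso).
  exact (kernel_pair_pullback bp kerf0).
apply/trivial_extE; split; [split | exact: idm_iso |].
- exact: cokernel_regular_epi (biprod_cokernel bp).
- exact: idm_regular_epi.
- exact (biprod_cokernel_pullback bp (cokm_cok a) (cokm_cok P) (cokind_spec pi2)).
Qed.

Lemma trivial_ext_jointly_mono (a b : arr A) (f : sq a b) :
  trivial_ext f -> jointly_mono (C := A) (sq0 f) (cokm a).
Proof.
move=> /trivial_extE [_ _ /pullback_jointly_mono jm] W u v e0 e1; exact: jm.
Qed.

Lemma abelian_trivial_ext (a b : arr A) (f : sq a b) : abelian A ->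
  is_extension f -> iso (C := A) (sq1 f) ->
  jointly_mono (C := A) (sq0 f) (cokm a) -> trivial_ext f.
Proof.
move=> Aab ext f1iso jm; apply/trivial_extE; split => //.
have [S [iX [iY [pX [pY bp]]]]] := qa_biprod (Cok a) (a_cod b).
have Mmono : mono (C := A) (iX ∘ cokm a + iY ∘ sq0 f).
  by apply: (biprod_pair_mono bp) => W u v e1 e0; exact: jm.
have cokM := cokernel_square_cokernel (iso_epi f1iso) bp.
have := kernel_diff_pullback bp (abelian_mono_kernel_cokernel Aab Mmono cokM).
by rewrite (biprod_pairX bp) (biprod_pairY bp).
Qed.

End Reflection.

Theorem mainTheorem6 (A : QACat) (a b : arr A) (f : sq a b) :
  is_extension f ->
  (central_ext f <-> iso (C := cat_of A) (sq1 f)) /\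
  (abelian A ->
     (trivial_ext f <->
        iso (C := cat_of A) (sq1 f) /\
        jointly_mono (C := cat_of A) (sq0 f) (cokm a))).
Proof.
move=> ext; split; first by split; [exact: central_ext_iso | exact: iso_central_ext].
move=> Aab; split => [triv | [f1iso jm]]; last exact: abelian_trivial_ext.
have [_ f1iso _] := (trivial_extE f).1 triv.
by split; last exact: trivial_ext_jointly_mono.
Qed.
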